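(* Let $G=(V,E)$ with weights $w^\pm$ be as in the context, and let $P_0,N_0\subseteq V$ be disjoint. The joint distribution of the pair (final +active set, final -active set) produced by the CLT process with seeds $(P_0,N_0)$ is identical to the joint distribution of the pair (set of +active nodes, set of -active nodes) defined by distances in the random live-path graph $G_X$.
   Context: Weights: $G=(V,E)$ finite directed graph, each edge $(u,v)$ has weights $w^+_{uv},w^-_{uv}\ge 0$, with $w^\pm_{uv}=0$ for non-edges and $\sum_u w^+_{uv}\le1$, $\sum_u w^-_{uv}\le 1$ for all $v$. Seeds $P_0,N_0$ are disjoint. CLT process (two independent LT diffusions with negative dominance). Each node $v$ draws $\theta^+_v,\theta^-_v$ independently and uniformly from $[0,1]$. The positive diffusion is the LT process $R^+_0=P_0$, $R^+_t=R^+_{t-1}\cup\{v:\sum_{u\in R^+_{t-1}}w^+_{uv}\ge\theta^+_v\}$, and $\tau^+(v)=\min\{t: v\in R^+_t\}$ ($=\infty$ if no such $t$). The negative diffusion is defined identically from $N_0$, $w^-$, $\theta^-$, giving $\tau^-(v)$. A node $v$ is finally -active iff $\tau^-(v)<\infty$ and $\tau^-(v)\le\tau^+(v)$, and finally +active iff $\tau^+(v)<\infty$ and $\tau^+(v)<\tau^-(v)$. Random live-path graph $G_X$: independently for each $v\in V$, select at most one positive in-edge, choosing $(u,v)$ with probability $w^+_{uv}$ and no positive in-edge with probability $1-\sum_u w^+_{uv}$; independently, select at most one negative in-edge in the same way using $w^-$. Let $G^+$ (resp. $G^-$) be the graph on $V$ with the selected positive (resp. negative) edges. For $A\subseteq V$,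 $d_{G^+}(A,v)$ is the length of a shortest directed path in $G^+$ from a node of $A$ to $v$ ($0$ if $v\in A$, $\infty$ if none); $d_{G^-}(A,v)$ similarly. In $G_X$, $v$ is +active iff $d_{G^+}(P_0,v)<\infty$ and $d_{G^+}(P_0,v)<d_{G^-}(N_0,v)$, and -active iff $d_{G^-}(N_0,v)<\infty$ and $d_{G^-}(N_0,v)\le d_{G^+}(P_0,v)$. *)

From mathcomp Require Import all_boot.
From Stdlib Require Import Reals ClassicalEpsilon.

Set Implicit Arguments.
Unset Strict Implicit.
Unset Printing Implicit Defensive.

Definition pb (P : Prop) : bool :=
  if excluded_middle_informative P then true else false.

Section Defs.
Variable V : finType.

Definition insum (w : V -> V -> R) (S : {set V}) (v : V) : R :=
  \big[Rplus/R0]_(u in S) w u v.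

Definition valid_weights (E : rel V) (w : V -> V -> R) : Prop :=
  (forall u v, (0 <= w u v)%R) /\
  (forall u v, ~~ E u v -> w u v = R0) /\
  (forall v, (insum w [set: V] v <= 1)%R).

Fixpoint lt_set (w : V -> V -> R) (theta : V -> R) (S0 : {set V}) (t : nat)
  : {set V} :=
  match t with
  | 0 => S0
  | t'.+1 =>
      let S := lt_set w theta S0 t' in
      S :|: [set v | if Rle_dec (theta v) (insum w S v) then true else false]
  end.

Definition tau_is w theta S0 (v : V) (t : nat) : Prop :=
  v \in lt_set w theta S0 t /\ forall s, (s < t)%N -> v \notin lt_set w theta S0 s.
Definition tau_inf w theta S0 (v : V) : Prop :=
  forall t, v \notin lt_set w theta S0 t.

Definition clt_plus (wp wn : V -> V -> R) (thp thn : V -> R) (P0 N0 : {set V})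
  (v : V) : Prop :=
  exists t, tau_is wp thp P0 v t /\
    (tau_inf wn thn N0 v \/ exists t', tau_is wn thn N0 v t' /\ (t < t')%N).
Definition clt_minus (wp wn : V -> V -> R) (thp thn : V -> R) (P0 N0 : {set V})
  (v : V) : Prop :=
  exists t', tau_is wn thn N0 v t' /\
    (tau_inf wp thp P0 v \/ exists t, tau_is wp thp P0 v t /\ (t' <= t)%N).

Definition clt_outcome wp wn thp thn P0 N0 (A B : {set V}) : Prop :=
  forall v, (v \in A <-> clt_plus wp wn thp thn P0 N0 v) /\
            (v \in B <-> clt_minus wp wn thp thn P0 N0 v).

(* ---------- Uniform thresholds: probability via Jordan content ----------
   The threshold vector (theta^+, theta^-) is uniform on [0,1]^(2|V|).
   The event {CLT outcome = (A,B)} is Jordan measurable, so its probability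
   is the limit of the fraction of points of the grid
   {1/k, 2/k, ..., k/k}^(2|V|) lying in it.  *)
Definition grid_pt (k : nat) (i : 'I_k) : R := (INR i.+1 / INR k)%R.

Definition clt_grid_freq wp wn P0 N0 (A B : {set V}) (k : nat) : R :=
  (INR #|[set th : {ffun V -> 'I_k.+1} * {ffun V -> 'I_k.+1} |
           pb (clt_outcome wp wn (fun v => grid_pt (th.1 v))
                                 (fun v => grid_pt (th.2 v)) P0 N0 A B)]|
   / (INR k.+1 ^ (2 * #|V|)))%R.

(* ---------- Live-path graph ----------
   sel v = Some u : the in-edge (u,v) is selected; None : no in-edge. *)
Definition sel_prob (w : V -> V -> R) (sel : {ffun V -> option V}) : R :=
  \big[Rmult/R1]_(v : V)
     match sel v with
     | Some u => w u v
     | None => (1 - insum w [set: V] v)%R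
     end.

Fixpoint path_len (sel : {ffun V -> option V}) (A : {set V}) (n : nat) (v : V)
  : Prop :=
  match n with
  | 0 => v \in A
  | n'.+1 => exists u, sel v = Some u /\ path_len sel A n' u
  end.

Definition dist_is sel A v d : Prop :=
  path_len sel A d v /\ forall d', (d' < d)%N -> ~ path_len sel A d' v.
Definition dist_inf sel A v : Prop := forall d, ~ path_len sel A d v.

Definition lp_plus (sp sn : {ffun V -> option V}) (P0 N0 : {set V}) v : Prop :=
  exists d, dist_is sp P0 v d /\
    (dist_inf sn N0 v \/ exists d', dist_is sn N0 v d' /\ (d < d')%N).
Definition lp_minus (sp sn : {ffun V -> option V}) (P0 N0 : {set V}) v : Prop :=
  exists d', dist_is sn N0 v d' /\
    (dist_inf sp P0 v \/ exists d, dist_is sp P0 v d /\ (d' <= d)%N).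

Definition lp_outcome sp sn P0 N0 (A B : {set V}) : Prop :=
  forall v, (v \in A <-> lp_plus sp sn P0 N0 v) /\
            (v \in B <-> lp_minus sp sn P0 N0 v).

Definition lp_prob wp wn P0 N0 (A B : {set V}) : R :=
  \big[Rplus/R0]_(s : {ffun V -> option V} * {ffun V -> option V})
     (if pb (lp_outcome s.1 s.2 P0 N0 A B)
      then (sel_prob wp s.1 * sel_prob wn s.2)%R else R0).

End Defs.

(* Both models are instances of one monotone process on subsets of V:
   R_0 = S_0 and R_(t+1) = R_t ∪ {v | G v R_t}, where G v S is the threshold
   test θ_v <= Σ_(u ∈ S) w_uv for the LT diffusion, and "the in-edge selected
   at v comes from S" for the live-path graph (R_t is then the set of nodes at
   distance at most t from S_0).  A run is summarised by its vector f of
   activation times (capped at |V|+1 for "never"); the (+,-) outcome is a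
   function of the two time vectors.  Moreover f is the time vector of a run
   iff every node v passes a test that only involves G v and the two sets
   {u | f u < f v - 1} ⊆ {u | f u < f v}.  This test depends on θ_v alone
   (resp. on the selection at v alone), so the probability of a time vector
   is a product over the nodes, and the factor at v is the same in both
   models: the w-mass of {u | f u = f v - 1} (or of {u | f u = never}), which
   the frequency of grid thresholds approximates within 1/(k+1). *)

From HB Require Import structures.
From Stdlib Require Import Reals Lra ClassicalEpsilon.
From mathcomp Require Import all_boot zify.

Set Implicit Arguments.
Unset Strict Implicit.
Unset Printing Implicit Defensive.

Definition horizon (V : finType) := #|V|.+1.

Lemma up_closed_count (b : pred nat) n t : (forall s, b s -> b s.+1) -> t < n ->
  b t = (count (predC b) (iota 0 n) <= t).
Proof.
move=> up lt_tn; have mono s s' : s <= s' -> b s -> b s'.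
  by move=> /subnK <-; elim: (s' - s) => // d IH /IH; exact: up.
rewrite -(subnKC lt_tn) iotaD count_cat add0n.
case bt: (b t).
  have -> : count (predC b) (iota t.+1 (n - t.+1)) = 0.
    apply/eqP; rewrite -leqn0 leqNgt -has_count; apply/hasPn => s.
    by rewrite mem_iota /= negbK => /andP [/ltnW le_ts _]; exact: mono bt.
  rewrite -addn1 iotaD count_cat /= bt !addn0.
  by apply/esym; apply: leq_trans (count_size _ _) _; rewrite size_iota.
have -> : count (predC b) (iota 0 t.+1) = t.+1.
  rewrite -[in RHS](size_iota 0 t.+1); apply/eqP; rewrite -all_count; apply/allP => s.
  by rewrite mem_iota /= ltnS => le_st; apply/negP => /(mono _ _ le_st); rewrite bt.
by rewrite addSn ltnNge leq_addr.
Qed.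

Section Reach.
Variables (V : finType) (G : V -> {set V} -> bool) (S0 : {set V}).

Fixpoint reach (t : nat) : {set V} :=
  if t is t'.+1 then reach t' :|: [set v | G v (reach t')] else S0.

Lemma reach_sub s t : s <= t -> reach s \subset reach t.
Proof.
move=> /subnK <-; elim: (t - s) => [|d IH] //=.
exact: subset_trans IH (subsetUl _ _).
Qed.

Lemma reach_stalls : exists2 s, s <= #|V| & reach s.+1 = reach s.
Proof.
suff [s lt_s_V stall] : exists2 s, s < #|V|.+1 & reach s.+1 = reach s by exists s.
have grow s : (exists2 s', s' < s & reach s'.+1 = reach s') \/ s <= #|reach s|.
  elim: s => [|s [[s' lt_s's stall]|IH]]; first by right.
    by left; exists s' => //; apply: ltnW.
  have [stall|grows] := eqVneq (reach s.+1) (reach s); first by left; exists s.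
  right; apply: leq_ltn_trans IH (proper_card _).
  by rewrite properEneq eq_sym grows subsetUl.
case: (grow #|V|.+1) => // /leq_trans /(_ (max_card _)); by rewrite ltnn.
Qed.

Lemma reach_stable t : #|V| <= t -> reach t = reach #|V|.
Proof.
have [s le_sV stall] := reach_stalls.
have stuck d : reach (d + s) = reach s.
  by elim: d => // d IH; rewrite addSn /= IH; exact: stall.
by move=> le_Vt; rewrite -(subnK le_Vt) -(subnK le_sV) addnA !stuck.
Qed.

(* [horizon V] means "never activated", since [reach] is stable from [#|V|] on. *)
Definition act_time v := count (fun t => v \notin reach t) (iota 0 (horizon V)).

Lemma act_time_le v : act_time v <= horizon V.
Proof. by apply: leq_trans (count_size _ _) _; rewrite size_iota. Qed.

Lemma mem_reach_lt t v : t < horizon V -> (v \in reach t) = (act_time v <= t).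
Proof.
by move=> lt_t; apply: up_closed_count lt_t => s; rewrite /= inE => ->.
Qed.

Lemma mem_reach t v : (v \in reach t) = (act_time v <= t) && (act_time v < horizon V).
Proof.
have [lt_t|le_t] := ltnP t (horizon V).
  rewrite mem_reach_lt //; case: (leqP (act_time v) t) => //= le_at.
  by rewrite (leq_ltn_trans le_at lt_t).
have le_at := act_time_le v.
rewrite reach_stable 1?mem_reach_lt /horizon ?leqnn //; last exact: ltnW.
by rewrite (leq_trans le_at le_t) /=; lia.
Qed.

Lemma reach_first v t :
  (v \in reach t /\ forall s, s < t -> v \notin reach s) <->
  act_time v = t /\ t < horizon V.
Proof.
split=> [[]|[<- lt_t]]; last first.
  by rewrite mem_reach leqnn lt_t; split=> // s lt_s; rewrite mem_reach leqNgt lt_s.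
rewrite mem_reach => /andP [le_at lt_a] first.
have [lt_at|le_ta] := ltnP (act_time v) t; last by split => //; lia.
by have := first _ lt_at; rewrite mem_reach leqnn lt_a.
Qed.

Lemma reach_never v : (forall t, v \notin reach t) <-> act_time v = horizon V.
Proof.
split=> [never|never_a t]; last by rewrite mem_reach never_a ltnn andbF.
have := never (act_time v); rewrite mem_reach leqnn /= => /negbTE lt_a.
by apply/eqP; rewrite eqn_leq act_time_le leqNgt lt_a.
Qed.

Definition levels (f : V -> nat) t := [set u | (f u <= t) && (f u < horizon V)].

Lemma levels_act_time f : (forall v, act_time v = f v) -> forall t, reach t = levels f t.
Proof. by move=> eq_f t; apply/setP => u; rewrite inE mem_reach eq_f. Qed.

Lemma act_time_levels f : (forall v, f v <= horizon V) ->
  (forall t, reach t = levels f t) -> forall v, act_time v = f v.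
Proof.
move=> le_f eq_reach v.
have same t : (act_time v <= t) && (act_time v < horizon V) = (f v <= t) && (f v < horizon V).
  by rewrite -mem_reach eq_reach inE.
have := same (act_time v); have := same (f v); have := act_time_le v; have := le_f v.
rewrite !leqnn /=; case: (ltngtP (act_time v) (f v)) => //; do 2 case: ltnP => //=; lia.
Qed.

Definition local_cond (f : V -> nat) v :=
  if f v == 0 then v \in S0 else (v \notin S0) &&
  (if f v == horizon V then ~~ G v [set u | f u < horizon V]
   else G v [set u | f u < f v] && ~~ G v [set u | f u < (f v).-1]).

Lemma levels_below f t : t < horizon V -> levels f t = [set u | f u < t.+1].
Proof. by move=> lt_t; apply/setP => u; rewrite !inE ltnS; case: leqP => //= ?; lia. Qed.

Hypothesis G_mono : forall v (S T : {set V}), S \subset T -> G v S -> G v T.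
Hypothesis G_set0 : forall v, G v set0 = false.

Lemma local_cond_levels f : (forall v, f v <= horizon V) ->
  (forall t, reach t = levels f t) -> forall v, local_cond f v.
Proof.
move=> le_f eq_reach v.
have inR t : (v \in reach t) = (f v <= t) && (f v < horizon V) by rewrite eq_reach inE.
have stepR t : t < horizon V ->
    (v \in reach t.+1) = (v \in reach t) || G v [set u | f u < t.+1].
  by move=> lt_tH; rewrite /= in_setU inE eq_reach levels_below.
have inS0 : (v \in S0) = (f v == 0) by rewrite (inR 0) leqn0 andb_idr // => /eqP ->.
rewrite /local_cond inS0; case: eqP => [//| ne0] /=.
have [eqH|neH] := eqVneq (f v) (horizon V).
  by have := stepR #|V| (ltnSn _); rewrite !inR eqH ltnn !andbF => /esym/negbT.
have lt_fH : f v < horizon V by rewrite ltn_neqAle neH le_f.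
have [t eq_ft] : exists t, f v = t.+1 by case: (f v) ne0 => // t _; exists t.
rewrite eq_ft /= in lt_fH *.
have := stepR t (ltnW lt_fH); rewrite !inR eq_ft ltnn leqnn lt_fH /= => /esym ->.
case: t eq_ft lt_fH => [|s] eq_fs lt_sH; last first.
  have := stepR s (ltnW (ltnW lt_sH)); rewrite !inR eq_fs ltnn (ltnNge s.+1 s) leqnSn /=.
  by move=> /esym/negbT.
suff -> : [set u | f u < 0] = set0 :> {set V} by rewrite G_set0.
by apply/setP => u; rewrite inE.
Qed.

Lemma levels_local_cond f : (forall v, f v <= horizon V) ->
  (forall v, local_cond f v) -> forall t, reach t = levels f t.
Proof.
move=> le_f cond; elim=> [|t IH]; apply/setP => v; rewrite /levels inE; have := cond v;
  rewrite /local_cond; have [->|ne0] := eqVneq (f v) 0 => //.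
- by rewrite /=; case/andP => /negbTE ->; case: (f v) ne0.
- by move=> /(subsetP (reach_sub (leq0n t.+1))) ->.
rewrite /= IH in_setU !inE => /andP [_].
have [eqH|neH] := eqVneq (f v) (horizon V).
  rewrite eqH ltnn !andbF /= => not_G; apply/negbTE; apply: contra not_G.
  by apply: G_mono; apply/subsetP => u; rewrite !inE => /andP [].
have lt_fH : f v < horizon V by rewrite ltn_neqAle neH le_f.
rewrite lt_fH !andbT => /andP [G_lt not_G_pred].
have [le_ft|lt_tf] := leqP (f v) t; first by rewrite ltnW.
have [eq_ft|ne_ft] := eqVneq (f v) t.+1.
  by rewrite levels_below -?eq_ft ?leqnn // (ltn_trans lt_tf).
rewrite (_ : f v <= t.+1 = false) /=; last by lia.
apply/negbTE; apply: contra not_G_pred; apply: G_mono.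
by apply/subsetP => u; rewrite !inE => /andP [le_ut _]; lia.
Qed.

Definition time_vec := {ffun V -> 'I_(horizon V).+1}.

Definition act_times : time_vec := [ffun v => inord (act_time v)].

Lemma act_timesE v : act_times v = act_time v :> nat.
Proof. by rewrite ffunE inordK // ltnS act_time_le. Qed.

Lemma act_times_eqE (f : time_vec) : (act_times == f) = [forall v, local_cond (fun u => f u) v].
Proof.
have le_f v : f v <= horizon V by rewrite -ltnS ltn_ord.
apply/idP/idP => [/eqP <- | /forallP cond].
  apply/forallP; apply: local_cond_levels => [u | t]; first by rewrite act_timesE act_time_le.
  by apply: levels_act_time => u; rewrite act_timesE.
apply/eqP/ffunP => v; apply/val_inj; rewrite /= act_timesE.
by apply: (act_time_levels le_f); exact: levels_local_cond le_f cond.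
Qed.

End Reach.

Lemma win_race n (first1 first2 : nat -> Prop) (never2 : Prop) (T1 T2 : nat) (r : rel nat) :
  T2 <= n -> (forall t, t < n -> r t n) ->
  (forall t, first1 t <-> T1 = t /\ t < n) ->
  (forall t, first2 t <-> T2 = t /\ t < n) -> (never2 <-> T2 = n) ->
  (exists t, first1 t /\ (never2 \/ exists t', first2 t' /\ r t t')) <-> (T1 < n) && r T1 T2.
Proof.
move=> le2 r_n first1E first2E never2E; split.
  case=> t [/first1E [<- lt1] [/never2E ->|[t' [/first2E [<- _] r12]]]]; rewrite lt1 //=; exact: r_n.
case/andP => lt1 r12; exists T1; split; first exact/first1E.
have [lt2|eq2] : T2 < n \/ T2 = n by lia.
  by right; exists T2; split => //; exact/first2E.
by left; exact/never2E.
Qed.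

Definition rleb (x y : R) : bool := if Rle_dec x y then true else false.

Section Outcome.
Variable V : finType.
Implicit Types (f g : time_vec V) (A B : {set V}).

Definition outcome_of_times A B f g : bool :=
  [forall v, (v \in A == (f v < horizon V) && (f v < g v)) &&
             (v \in B == (g v < horizon V) && (g v <= f v))].

Lemma outcome_of_timesP (first_p first_n : V -> nat -> Prop) (never_p never_n : V -> Prop)
    A B f g :
  (forall v t, first_p v t <-> f v = t :> nat /\ t < horizon V) ->
  (forall v, never_p v <-> f v = horizon V :> nat) ->
  (forall v t, first_n v t <-> g v = t :> nat /\ t < horizon V) ->
  (forall v, never_n v <-> g v = horizon V :> nat) ->
  (forall v,
    (v \in A <-> exists t, first_p v t /\
       (never_n v \/ exists t', first_n v t' /\ t < t')) /\
    (v \in B <-> exists t', first_n v t' /\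
       (never_p v \/ exists t, first_p v t /\ t' <= t)))
  <-> outcome_of_times A B f g.
Proof.
move=> first_pE never_pE first_nE never_nE.
have le_h (h : time_vec V) v : h v <= horizon V by rewrite -ltnS ltn_ord.
have plusE v := win_race (r := ltn) (le_h g v) (fun t lt_t => lt_t)
  (first_pE v) (first_nE v) (never_nE v).
have minusE v := win_race (r := fun t' t => t' <= t) (le_h f v) (fun t lt_t => ltnW lt_t)
  (first_nE v) (first_pE v) (never_pE v).
split=> [out | /forallP out v].
  apply/forallP => v; have [inA inB] := out v.
  apply/andP; split; apply/eqP; apply/idP/idP.
  - by move/inA/(plusE v).
  - by move/(plusE v)/inA.
  - by move/inB/(minusE v).
  - by move/(minusE v)/inB.
have /andP [/eqP -> /eqP ->] := out v.
by split; apply: iff_sym; [exact: plusE | exact: minusE].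
Qed.

Lemma first_time_reach (G : V -> {set V} -> bool) S0 (P : nat -> Prop) v :
  (forall t, v \in reach G S0 t <-> exists2 d, d <= t & P d) ->
  (forall t, (P t /\ forall s, s < t -> ~ P s) <->
             act_times G S0 v = t :> nat /\ t < horizon V) /\
  ((forall t, ~ P t) <-> act_times G S0 v = horizon V :> nat).
Proof.
move=> reachE; rewrite act_timesE; split=> [t|]; last first.
  rewrite -reach_never; split=> [noP t | never t Pt].
    by apply/negP => /reachE [d _ /noP].
  by have /negP := never t; apply; apply/reachE; exists t.
rewrite -reach_first; split=> [[Pt minimal] | [/reachE [d le_dt Pd] first]].
  split=> [|s lt_st]; first by apply/reachE; exists t.
  by apply/negP => /reachE [d le_ds /minimal]; apply; apply: leq_ltn_trans lt_st.
have eq_dt : d = t.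
  apply/eqP; rewrite eqn_leq le_dt leqNgt; apply/negP => /first /negP; apply.
  by apply/reachE; exists d.
subst d; split=> // s lt_st Ps; have /negP := first s lt_st; apply.
by apply/reachE; exists s.
Qed.

Definition threshold_test (w : V -> V -> R) (theta : V -> R) v (S : {set V}) : bool :=
  rleb (theta v) (insum w S v).

Definition opt_in (o : option V) (S : {set V}) : bool :=
  if o is Some u then u \in S else false.

Definition sel_test (sel : {ffun V -> option V}) v (S : {set V}) : bool := opt_in (sel v) S.

Lemma mem_reach_threshold w theta S0 t v :
  v \in reach (threshold_test w theta) S0 t <->
  exists2 d, d <= t & v \in lt_set w theta S0 d.
Proof.
have lt_setE d : lt_set w theta S0 d = reach (threshold_test w theta) S0 d by elim: d => //= d ->.
split=> [|[d le_dt]]; first by exists t; rewrite ?lt_setE.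
by rewrite lt_setE; apply/subsetP/reach_sub.
Qed.

Lemma mem_reach_sel sel S0 t v :
  v \in reach (sel_test sel) S0 t <-> exists2 d, d <= t & path_len sel S0 d v.
Proof.
elim: t v => [|t IH] v /=.
  by split=> [|[d]]; [exists 0 | rewrite leqn0 => /eqP ->].
rewrite in_setU inE /sel_test /opt_in; split.
  case/orP => [/IH [d le_dt path_d]|]; first by exists d => //; apply: leqW.
  by case sel_v: (sel v) => [u|] // /IH [d le_dt path_d]; exists d.+1 => //; exists u.
case=> d; rewrite leq_eqVlt => /orP [/eqP -> [u [-> path_t]] | lt_dt path_d].
  by apply/orP; right; apply/IH; exists t.
by apply/orP; left; apply/IH; exists d.
Qed.

Lemma clt_outcomeE wp wn thp thn P0 N0 A B :
  clt_outcome wp wn thp thn P0 N0 A B <->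
  outcome_of_times A B (act_times (threshold_test wp thp) P0)
                       (act_times (threshold_test wn thn) N0).
Proof.
have specs w theta S0 v := first_time_reach (mem_reach_threshold w theta S0 ^~ v).
have tauE w theta S0 v t : tau_is w theta S0 v t <->
    (v \in lt_set w theta S0 t /\ forall s, s < t -> ~ v \in lt_set w theta S0 s).
  by split=> [] [in_t first]; split=> // s /first /negP.
have infE w theta S0 v : tau_inf w theta S0 v <-> forall t, ~ v \in lt_set w theta S0 t.
  by split=> never t; apply/negP.
apply: outcome_of_timesP => v => [t|| t|]; rewrite ?tauE ?infE;
  by [apply: (specs _ _ _ v).1 | apply: (specs _ _ _ v).2].
Qed.

Lemma lp_outcomeE sp sn P0 N0 A B :
  lp_outcome sp sn P0 N0 A B <->
  outcome_of_times A B (act_times (sel_test sp) P0) (act_times (sel_test sn) N0).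
Proof.
have specs sel S0 v := first_time_reach (mem_reach_sel sel S0 ^~ v).
apply: outcome_of_timesP => v => [t|| t|];
  by [apply: (specs _ _ v).1 | apply: (specs _ _ v).2].
Qed.

End Outcome.

Local Open Scope R_scope.

Lemma RplusA : associative Rplus. Proof. by move=> *; rewrite Rplus_assoc. Qed.
Lemma RmultA : associative Rmult. Proof. by move=> *; rewrite Rmult_assoc. Qed.
HB.instance Definition _ :=
  Monoid.isComLaw.Build R R0 Rplus RplusA Rplus_comm Rplus_0_l.
HB.instance Definition _ :=
  Monoid.isComLaw.Build R R1 Rmult RmultA Rmult_comm Rmult_1_l.
HB.instance Definition _ := Monoid.isMulLaw.Build R R0 Rmult Rmult_0_l Rmult_0_r.
HB.instance Definition _ :=
  Monoid.isAddLaw.Build R Rmult Rplus Rmult_plus_distr_r Rmult_plus_distr_l.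

Definition ind (b : bool) : R := if b then 1 else 0.

Lemma rlebP x y : reflect (x <= y) (rleb x y).
Proof. by rewrite /rleb; case: Rle_dec => H; constructor. Qed.

Lemma sum_ge0 (I : finType) (F : I -> R) : (forall i, 0 <= F i) -> 0 <= \big[Rplus/0]_i F i.
Proof. by move=> F_ge0; apply: (big_ind (fun x => 0 <= x)) => //; [lra | move=> *; lra]. Qed.

(* [big_ord_recr] and [big_distrl] with the operators [Rplus] and [Rmult]
   themselves rather than their monoid structures, so that [ring] and [lra]
   recognise them. *)
Lemma sum_ord_recr n (F : 'I_n.+1 -> R) :
  \big[Rplus/0]_(i < n.+1) F i =
  \big[Rplus/0]_(i < n) F (widen_ord (leqnSn n) i) + F ord_max.
Proof. exact: big_ord_recr. Qed.

Lemma sum_mulr (I : finType) (F : I -> R) (c : R) :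
  (\big[Rplus/0]_i F i) * c = \big[Rplus/0]_i (F i * c).
Proof. exact: big_distrl. Qed.

Lemma sum_const_ord n (c : R) : \big[Rplus/0]_(i < n) c = INR n * c.
Proof.
elim: n => [|n IH]; first by rewrite big_ord0 /=; lra.
by rewrite sum_ord_recr IH S_INR; ring.
Qed.

Lemma prod_const (I : finType) (c : R) : \big[Rmult/1]_(i : I) c = c ^ #|I|.
Proof. by rewrite big_const; elim: #|I| => //= m ->. Qed.

Lemma prod_div (I : finType) (a b : I -> R) :
  \big[Rmult/1]_i (a i / b i) = (\big[Rmult/1]_i a i) / (\big[Rmult/1]_i b i).
Proof. by rewrite /Rdiv big_split /= (big_morph Rinv Rinv_mult Rinv_1). Qed.

Lemma prod_ind (I : finType) (P : pred I) : \big[Rmult/1]_i ind (P i) = ind [forall i, P i].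
Proof.
case: forallP => [P_all|]; first by rewrite big1 // => i _; rewrite P_all.
move/forallP; rewrite negb_forall => /existsP [i not_Pi].
by rewrite (bigD1 i) //= /ind (negbTE not_Pi) Rmult_0_l.
Qed.

Lemma card_ind (I : finType) (P : pred I) : INR #|[set i | P i]| = \big[Rplus/0]_i ind (P i).
Proof.
rewrite -sum1_card (big_morph INR plus_INR (erefl (INR 0))) big_mkcond /=.
by apply: eq_bigr => i _; rewrite inE /ind; case: (P i).
Qed.

Lemma sum_option (I : finType) (i0 : I) (F : option I -> R) :
  \big[Rplus/0]_o F o = F None + \big[Rplus/0]_i F (Some i).
Proof.
rewrite (bigD1 None) //=; congr (_ + _).
rewrite (reindex_onto Some (odflt i0)) /=; last by case.
by apply: eq_bigl => i; rewrite eqxx.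
Qed.

Lemma cv_const c : Un_cv (fun _ => c) c.
Proof. by move=> e e_gt0; exists 0%nat => n _; rewrite /R_dist Rminus_diag Rabs_R0. Qed.

Lemma cv_by_bound (u : nat -> R) l : (forall k, Rabs (u k - l) <= / INR k.+1) -> Un_cv u l.
Proof.
move=> bound e e_gt0; have [N [lt_N N_gt0]] := archimed_cor1 e e_gt0.
exists N => n le_Nn; rewrite /R_dist; apply: Rle_lt_trans (bound n) _.
apply: Rle_lt_trans lt_N; apply: Rinv_le_contravar; first exact: lt_0_INR.
by apply: le_INR; lia.
Qed.

Lemma cv_sum (I : Type) (r : seq I) (F : nat -> I -> R) (l : I -> R) :
  (forall i, Un_cv (F^~ i) (l i)) ->
  Un_cv (fun k => \big[Rplus/0]_(i <- r) F k i) (\big[Rplus/0]_(i <- r) l i).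
Proof.
move=> cv_F; elim: r => [|i r IH].
  by rewrite big_nil; apply: (Un_cv_ext _ _ _ _ (cv_const 0)) => k; rewrite big_nil.
rewrite big_cons; apply: (Un_cv_ext _ _ _ _ (CV_plus _ _ _ _ (cv_F i) IH)) => k.
by rewrite big_cons.
Qed.

Lemma cv_prod (I : Type) (r : seq I) (F : nat -> I -> R) (l : I -> R) :
  (forall i, Un_cv (F^~ i) (l i)) ->
  Un_cv (fun k => \big[Rmult/1]_(i <- r) F k i) (\big[Rmult/1]_(i <- r) l i).
Proof.
move=> cv_F; elim: r => [|i r IH].
  by rewrite big_nil; apply: (Un_cv_ext _ _ _ _ (cv_const 1)) => k; rewrite big_nil.
rewrite big_cons; apply: (Un_cv_ext _ _ _ _ (CV_mult _ _ _ _ (cv_F i) IH)) => k.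
by rewrite big_cons.
Qed.

Definition grid_count n x := \big[Rplus/0]_(i < n) ind (rleb (INR i.+1) x).

Lemma grid_count_bounds n x : 0 <= x <= INR n -> x - 1 < grid_count n x <= x.
Proof.
move=> [x_ge0 le_xn].
suff /(_ n) [le_cx [le_cn [eq_cn|lt_xc]]] : forall n, grid_count n x <= x /\
    grid_count n x <= INR n /\ (grid_count n x = INR n \/ x < grid_count n x + 1).
  1, 2: by split; lra.
elim=> [|m [le_cx [le_cm cases]]].
  by rewrite /grid_count big_ord0 /=; split; [|split]; [lra | lra | left].
rewrite /grid_count sum_ord_recr -/(grid_count m x) S_INR /ind /=.
by case: rlebP; case: cases => *; (split; [|split]; [lra | lra | first [left; lra | right; lra]]).
Qed.

Lemma INR_succ_gt0 n : 0 < INR n.+1.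
Proof. by apply: lt_0_INR; lia. Qed.

Lemma grid_pt_le k (i : 'I_k) (c : R) : grid_pt i <= c <-> INR i.+1 <= c * INR k.
Proof.
have k_gt0 : 0 < INR k by move: (ltn_ord i) => lt_ik; apply: lt_0_INR; lia.
have : grid_pt i * INR k = INR i.+1 by rewrite /grid_pt; field; lra.
by move: (grid_pt i) => q scale; split=> le_qc; nra.
Qed.

Lemma grid_pt_gt0 k (i : 'I_k) : 0 < grid_pt i.
Proof. by move: (ltn_ord i) => lt_ik; apply: Rdiv_lt_0_compat; apply: lt_0_INR; lia. Qed.

Lemma grid_pt_le1 k (i : 'I_k) : grid_pt i <= 1.
Proof. by apply/grid_pt_le; rewrite Rmult_1_l; apply: le_INR; move: (ltn_ord i); lia. Qed.

Definition grid_freq k (P : R -> bool) : R :=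
  (\big[Rplus/0]_(i < k.+1) ind (P (grid_pt i))) / INR k.+1.

Lemma eq_grid_freq k (P Q : R -> bool) :
  (forall i : 'I_k.+1, P (grid_pt i) = Q (grid_pt i)) -> grid_freq k P = grid_freq k Q.
Proof. by move=> eq_PQ; rewrite /grid_freq; congr (_ / _); apply: eq_bigr => i _; rewrite eq_PQ. Qed.

Lemma grid_freq_const k (b : bool) : grid_freq k (fun=> b) = ind b.
Proof. by rewrite /grid_freq sum_const_ord; field; apply: not_0_INR. Qed.

Lemma grid_freq_interval a b : 0 <= a -> a <= b -> b <= 1 ->
  Un_cv (fun k => grid_freq k (fun x => rleb x b && ~~ rleb x a)) (b - a).
Proof.
move=> a_ge0 le_ab le_b1; apply: cv_by_bound => k.
have n_gt0 := INR_succ_gt0 k; set n := INR k.+1 in n_gt0 *.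
have countE c : \big[Rplus/0]_(i < k.+1) ind (rleb (grid_pt i) c) = grid_count k.+1 (c * n).
  by apply: eq_bigr => i _; congr ind; apply/rlebP/rlebP => /grid_pt_le.
have splitE : \big[Rplus/0]_(i < k.+1) ind (rleb (grid_pt i) b && ~~ rleb (grid_pt i) a) =
    grid_count k.+1 (b * n) - grid_count k.+1 (a * n).
  rewrite -!countE; suff : \big[Rplus/0]_(i < k.+1) ind (rleb (grid_pt i) b) =
      \big[Rplus/0]_(i < k.+1) (ind (rleb (grid_pt i) b && ~~ rleb (grid_pt i) a) +
                               ind (rleb (grid_pt i) a)) by rewrite big_split /=; lra.
  apply: eq_bigr => i _; rewrite /ind; do 2 case: rlebP => //=; lra.
have [lo_a hi_a] : a * n - 1 < grid_count k.+1 (a * n) <= a * n.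
  by apply: grid_count_bounds; rewrite -/n; split; nra.
have [lo_b hi_b] : b * n - 1 < grid_count k.+1 (b * n) <= b * n.
  by apply: grid_count_bounds; rewrite -/n; split; nra.
have inv_gt0 := Rinv_0_lt_compat _ n_gt0.
move: lo_a hi_a lo_b hi_b; rewrite /grid_freq splitE -/n.
move: (grid_count _ (a * n)) (grid_count _ (b * n)) => ca cb lo_a hi_a lo_b hi_b.
rewrite (_ : (cb - ca) / n - (b - a) = ((cb - b * n) - (ca - a * n)) * / n); last by field; lra.
rewrite Rabs_mult (Rabs_pos_eq (/ n) (Rlt_le _ _ inv_gt0)) -[X in _ <= X]Rmult_1_l.
by apply: Rmult_le_compat_r; [lra | apply: Rabs_le; lra].
Qed.

Section LocalMass.
Variables (V : finType) (w : V -> V -> R).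

Lemma insumE (S : {set V}) v : insum w S v = \big[Rplus/0]_u (ind (u \in S) * w u v).
Proof.
rewrite /insum big_mkcond; apply: eq_bigr => u _.
by rewrite /ind; case: (u \in S) => /=; lra.
Qed.

Lemma insumD (A B : {set V}) v : A \subset B -> insum w (B :\: A) v = insum w B v - insum w A v.
Proof. by move=> /setIidPr sub_AB; rewrite /insum [in RHS](big_setID A) /= sub_AB; lra. Qed.

Definition sel_weight v (o : option V) : R :=
  if o is Some u then w u v else 1 - insum w [set: V] v.

(* [local_cond] only queries its test at [v], so the test may ignore the node. *)
Definition sel_local (S0 : {set V}) (f : V -> nat) v (o : option V) : bool :=
  local_cond (fun _ => opt_in o) S0 f v.

Definition threshold_local (S0 : {set V}) (f : V -> nat) v (x : R) : bool :=
  local_cond (fun u S => rleb x (insum w S u)) S0 f v.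

Definition local_mass (S0 : {set V}) (f : V -> nat) v : R :=
  if f v == 0%N then ind (v \in S0) else if v \in S0 then 0 else
  if f v == horizon V then 1 - insum w [set u | f u < horizon V]%N v
  else insum w [set u | f u < f v]%N v - insum w [set u | f u < (f v).-1]%N v.

Lemma sum_sel_weightE v (F : option V -> R) :
  \big[Rplus/0]_o (F o * sel_weight v o) =
  F None * (1 - insum w [set: V] v) + \big[Rplus/0]_u (F (Some u) * w u v).
Proof. exact: sum_option. Qed.

Lemma sum_ind_sel_weight v (c : bool) : \big[Rplus/0]_o (ind c * sel_weight v o) = ind c.
Proof.
rewrite sum_sel_weightE -big_distrr /= (_ : \big[Rplus/0]_u w u v = insum w [set: V] v).
  by ring.
by rewrite insumE; apply: eq_bigr => u _; rewrite in_setT /ind; lra.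
Qed.

Lemma insum_indE (P : pred V) v :
  \big[Rplus/0]_u (ind (P u) * w u v) = insum w [set u | P u] v.
Proof. by rewrite insumE; apply: eq_bigr => u _; rewrite inE. Qed.

Lemma sel_local_mass S0 f v :
  \big[Rplus/0]_o (ind (sel_local S0 f v o) * sel_weight v o) = local_mass S0 f v.
Proof.
rewrite /sel_local /local_cond /local_mass.
case: eqP => _; first exact: sum_ind_sel_weight.
case: (v \in S0); first exact: (sum_ind_sel_weight v false).
case: eqP => _; rewrite sum_sel_weightE insum_indE /=.
  by rewrite -[[set u | _]]setTD insumD ?subsetT //; lra.
set B := [set u | _ < f v]%N; set A := [set u | _ < (f v).-1]%N.
rewrite (_ : [set u in B | u \notin A] = B :\: A); last by apply/setP => u; rewrite !inE andbC.
by rewrite insumD; [lra | apply/subsetP => u; rewrite !inE; lia].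
Qed.

Hypothesis w_ge0 : forall u v, 0 <= w u v.
Hypothesis insumT_le1 : forall v, insum w [set: V] v <= 1.

Lemma insum_ge0 S v : 0 <= insum w S v.
Proof. by rewrite insumE; apply: sum_ge0 => u; rewrite /ind; case: (u \in S); have := w_ge0 u v; lra. Qed.

Lemma insum_mono (A B : {set V}) v : A \subset B -> insum w A v <= insum w B v.
Proof. by move=> sub_AB; have := insum_ge0 (B :\: A) v; rewrite insumD //; lra. Qed.

Lemma grid_local_cvg S0 f v :
  Un_cv (fun k => grid_freq k (threshold_local S0 f v)) (local_mass S0 f v).
Proof.
have cv_const_freq (c : bool) : Un_cv (fun k => grid_freq k (fun=> c)) (ind c).
  by apply: (Un_cv_ext _ _ _ _ (cv_const _)) => k; rewrite grid_freq_const.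
rewrite /threshold_local /local_cond /local_mass.
case: eqP => _; first exact: cv_const_freq.
case: (v \in S0); first exact: (cv_const_freq false).
have le1 S : insum w S v <= 1 by apply: Rle_trans (insumT_le1 v); apply/insum_mono/subsetT.
case: eqP => _ /=.
  apply: (Un_cv_ext _ _ _ _ (grid_freq_interval (insum_ge0 _ v) (le1 _) (Rle_refl 1))) => k.
  by apply: eq_grid_freq => i; rewrite (_ : rleb _ 1 = true) //; apply/rlebP/grid_pt_le1.
apply: grid_freq_interval; [exact: insum_ge0 | | exact: le1].
by apply: insum_mono; apply/subsetP => u; rewrite !inE; lia.
Qed.

End LocalMass.

Lemma pbE (P : Prop) (b : bool) : (P <-> b) -> pb P = b.
Proof.
move=> eq_Pb; rewrite /pb; case: excluded_middle_informative => [/eq_Pb ->|not_P] //.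
by case: b eq_Pb => // eq_Pb; case: not_P; apply/eq_Pb.
Qed.

Lemma sum_prod_ffun (I J : finType) (P : I -> J -> bool) (F : I -> J -> R) :
  \big[Rplus/0]_(g : {ffun I -> J}) (ind [forall i, P i (g i)] * \big[Rmult/1]_i F i (g i))
  = \big[Rmult/1]_i \big[Rplus/0]_j (ind (P i j) * F i j).
Proof. by rewrite bigA_distr_bigA; apply: eq_bigr => g _; rewrite big_split /= prod_ind. Qed.

Definition fiber_mass (X Y : finType) (a : X -> Y) (p : X -> R) (y : Y) : R :=
  \big[Rplus/0]_x (ind (a x == y) * p x).

Lemma sum_fiber (X Y : finType) (a : X -> Y) (p : X -> R) (F : Y -> R) :
  \big[Rplus/0]_x (F (a x) * p x) = \big[Rplus/0]_y (F y * fiber_mass a p y).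
Proof.
rewrite (partition_big a xpredT) //=; apply: eq_bigr => y _.
rewrite big_distrr /= big_mkcond; apply: eq_bigr => x _.
by rewrite /ind; case: eqP => [->|_] /=; lra.
Qed.

Lemma sum_pair_fiber (X1 X2 Y1 Y2 : finType) (a1 : X1 -> Y1) (a2 : X2 -> Y2)
    (p1 : X1 -> R) (p2 : X2 -> R) (F : Y1 -> Y2 -> R) :
  \big[Rplus/0]_(x : X1 * X2) (F (a1 x.1) (a2 x.2) * (p1 x.1 * p2 x.2)) =
  \big[Rplus/0]_y1 \big[Rplus/0]_y2
    (F y1 y2 * (fiber_mass a1 p1 y1 * fiber_mass a2 p2 y2)).
Proof.
rewrite -(pair_bigA _ (fun x1 x2 => F (a1 x1) (a2 x2) * (p1 x1 * p2 x2))) /=.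
transitivity (\big[Rplus/0]_x1
    ((fun y1 => \big[Rplus/0]_x2 (F y1 (a2 x2) * p2 x2)) (a1 x1) * p1 x1)).
  by apply: eq_bigr => x1 _; rewrite big_distrl /=; apply: eq_bigr => x2 _; lra.
rewrite (sum_fiber a1 p1 (fun y1 => \big[Rplus/0]_x2 (F y1 (a2 x2) * p2 x2))).
apply: eq_bigr => y1 _.
by rewrite (sum_fiber a2 p2 (F y1)) big_distrl /=; apply: eq_bigr => y2 _; lra.
Qed.

Section Models.
Variable V : finType.
Implicit Types (w : V -> V -> R) (f : time_vec V).

Lemma sel_fiber_mass w (S0 : {set V}) f :
  fiber_mass (fun s => act_times (sel_test s) S0) (sel_prob w) f =
  \big[Rmult/1]_v local_mass w S0 (fun u => f u) v.
Proof.
rewrite -(eq_bigr _ (fun v _ => sel_local_mass w S0 (fun u => f u) v)) -sum_prod_ffun.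
apply: eq_bigr => s _; rewrite act_times_eqE // => [v A B /subsetP sub_AB|v].
  by rewrite /sel_test /opt_in; case: (s v) => // u /sub_AB.
by rewrite /sel_test /opt_in; case: (s v) => // u; rewrite in_set0.
Qed.

Lemma grid_fiber_mass w (S0 : {set V}) f k : (forall u v, 0 <= w u v) ->
  fiber_mass (fun x : {ffun V -> 'I_k.+1} =>
                act_times (threshold_test w (fun v => grid_pt (x v))) S0) (fun=> 1) f =
  \big[Rmult/1]_v \big[Rplus/0]_(i < k.+1) ind (threshold_local w S0 (fun u => f u) v (grid_pt i)).
Proof.
move=> w_ge0; rewrite -(eq_bigr _ (fun v _ => eq_bigr _ (fun i _ => Rmult_1_r _))).
rewrite -(sum_prod_ffun _ (fun _ _ => 1)); apply: eq_bigr => x _.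
rewrite big1 // act_times_eqE // => [v A B sub_AB | v].
  by move=> /rlebP le_th; apply/rlebP; apply: Rle_trans le_th (insum_mono _ _ _).
apply/rlebP/Rlt_not_le; rewrite /insum big_set0; exact: grid_pt_gt0.
Qed.

End Models.

Lemma lp_prob_times (V : finType) (wp wn : V -> V -> R) (P0 N0 A B : {set V}) :
  lp_prob wp wn P0 N0 A B =
  \big[Rplus/0]_(f : time_vec V) \big[Rplus/0]_(g : time_vec V)
    (ind (outcome_of_times A B f g) *
     (\big[Rmult/1]_v local_mass wp P0 (fun u => f u) v *
      \big[Rmult/1]_v local_mass wn N0 (fun u => g u) v)).
Proof.
rewrite /lp_prob (eq_bigr (fun s => ind (outcome_of_times A B
    (act_times (sel_test s.1) P0) (act_times (sel_test s.2) N0)) *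
    (sel_prob wp s.1 * sel_prob wn s.2))); last first.
  by move=> s _; rewrite (pbE (lp_outcomeE _ _ _ _ _ _)) /ind; case: (outcome_of_times _ _ _ _); lra.
rewrite (sum_pair_fiber (fun s => act_times (sel_test s) P0) (fun s => act_times (sel_test s) N0)
  _ _ (fun f g => ind (outcome_of_times A B f g))).
by apply: eq_bigr => f _; apply: eq_bigr => g _; rewrite !sel_fiber_mass.
Qed.

Lemma clt_grid_freq_times (V : finType) (wp wn : V -> V -> R) (P0 N0 A B : {set V}) k :
  (forall u v, 0 <= wp u v) -> (forall u v, 0 <= wn u v) ->
  clt_grid_freq wp wn P0 N0 A B k =
  \big[Rplus/0]_(f : time_vec V) \big[Rplus/0]_(g : time_vec V)
    (ind (outcome_of_times A B f g) *
     (\big[Rmult/1]_v grid_freq k (threshold_local wp P0 (fun u => f u) v) *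
      \big[Rmult/1]_v grid_freq k (threshold_local wn N0 (fun u => g u) v))).
Proof.
move=> wp_ge0 wn_ge0; rewrite /clt_grid_freq card_ind.
pose thr w S0 (x : {ffun V -> 'I_k.+1}) := act_times (threshold_test w (fun v => grid_pt (x v))) S0.
rewrite (eq_bigr (fun th => ind (outcome_of_times A B (thr wp P0 th.1) (thr wn N0 th.2)) *
    (1 * 1))); last first.
  by move=> th _; rewrite (pbE (clt_outcomeE _ _ _ _ _ _ _ _)) !Rmult_1_r.
rewrite (sum_pair_fiber (thr wp P0) (thr wn N0) (fun=> 1) (fun=> 1)
  (fun f g => ind (outcome_of_times A B f g))).
have n_nz : INR k.+1 ^ #|V| <> 0 by apply: pow_nonzero; apply: not_0_INR.
rewrite mul2n -addnn pow_add /Rdiv sum_mulr; apply: eq_bigr => f _.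
rewrite sum_mulr; apply: eq_bigr => g _.
by rewrite !grid_fiber_mass // /grid_freq !prod_div !prod_const; field.
Qed.

Theorem lemma1 (V : finType) (E : rel V) (wp wn : V -> V -> R)
  (P0 N0 : {set V}) :
  valid_weights E wp -> valid_weights E wn -> [disjoint P0 & N0] ->
  forall A B : {set V},
    Un_cv (clt_grid_freq wp wn P0 N0 A B) (lp_prob wp wn P0 N0 A B).
Proof.
move=> [wp_ge0 [_ wp_le1]] [wn_ge0 [_ wn_le1]] _ A B.
rewrite lp_prob_times.
apply: (Un_cv_ext _ _ (fun k => esym (clt_grid_freq_times P0 N0 A B k wp_ge0 wn_ge0))).
apply: cv_sum => f; apply: cv_sum => g; apply: CV_mult; first exact: cv_const.
by apply: CV_mult; apply: cv_prod => v; exact: grid_local_cvg.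
Qed.
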